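(* In the cost setting described in the context, for every choice of $d^*\le D/2$ there is an instance (with minimal expected delay $d^*$) for which every algorithm has pseudo-regret $\Omega(d^* )$.
   Context: Delay-as-payoff bandit: there are $K$ arms, a horizon $T$ and a maximum delay $D$. Each arm $i$ has a distribution $\mathcal{D}_i$ on $\{0,1,\dots,D\}$; at each step $t$ the agent chooses $i_t$ based on observed feedback, a delay $d_t\sim\mathcal{D}_{i_t}$ is drawn independently and revealed only at time $t+d_t$; the payoff is the cost $c_t=d_t/D$, to be minimized. Let $\mu(i)=\mathbb{E}_{X\sim\mathcal{D}_i}[X/D]$, $\mu^*=\min_i\mu(i)$, $d^*=D\mu^*$ (the minimal expected delay over arms). Pseudo-regret: $\mathbb{E}[\sum_{t=1}^T c_t]-T\mu^*$. *)

From HB Require Import structures.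
From mathcomp Require Import all_boot all_order all_algebra.
Set Implicit Arguments. Unset Strict Implicit. Unset Printing Implicit Defensive.
Import Order.TTheory GRing.Theory Num.Theory.
Local Open Scope ring_scope.

Section Bandit.
Variables (R : realFieldType) (K D : nat).

Definition is_instance (nu : 'I_K -> 'I_D.+1 -> R) : Prop :=
  (forall i j, 0 <= nu i j) /\ (forall i, \sum_(j < D.+1) nu i j = 1).

(* Expected delay of arm i, i.e. D * mu(i). *)
Definition mean_delay (nu : 'I_K -> 'I_D.+1 -> R) (i : 'I_K) : R :=
  \sum_(j < D.+1) nu i j * (j : nat)%:R.

Definition min_mean_delay (nu : 'I_K -> 'I_D.+1 -> R) (dstar : R) : Prop :=
  (exists i, mean_delay nu i = dstar) /\ (forall i, dstar <= mean_delay nu i).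

(* What the agent sees at the beginning of step t, given the full history h
   of (arm, delay) pairs for steps 0..t-1: the arm played at step s is known,
   and its delay d_s is known iff it was revealed at time s + d_s < t. *)
Definition observe (t : nat) (h : seq ('I_K * 'I_D.+1))
  : seq ('I_K * option 'I_D.+1) :=
  [seq (p.2.1, if (p.1 + nat_of_ord p.2.2 < t)%N then Some p.2.2 else None)
  | p : nat * ('I_K * 'I_D.+1) <- zip (iota 0 (size h)) h].

Definition is_policy (pi : seq ('I_K * option 'I_D.+1) -> 'I_K -> R) : Prop :=
  (forall o i, 0 <= pi o i) /\ (forall o, \sum_(i < K) pi o i = 1).

Definition traj_prob (T : nat) (pi : seq ('I_K * option 'I_D.+1) -> 'I_K -> R)
  (nu : 'I_K -> 'I_D.+1 -> R) (tr : T.-tuple ('I_K * 'I_D.+1)) : R :=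
  \prod_(t < T) (pi (observe t (take t tr)) (tnth tr t).1
                 * nu (tnth tr t).1 (tnth tr t).2).

Definition total_cost (T : nat) (tr : T.-tuple ('I_K * 'I_D.+1)) : R :=
  \sum_(t < T) ((tnth tr t).2 : nat)%:R / D%:R.

Definition pseudo_regret (T : nat) (pi : seq ('I_K * option 'I_D.+1) -> 'I_K -> R)
  (nu : 'I_K -> 'I_D.+1 -> R) (dstar : R) : R :=
  \sum_(tr : T.-tuple ('I_K * 'I_D.+1)) traj_prob pi nu tr * total_cost tr
  - T%:R * (dstar / D%:R).

End Bandit.

From HB Require Import structures.
From mathcomp Require Import all_boot all_order all_algebra.
From mathcomp Require Import ring lra.
Set Implicit Arguments.
Unset Strict Implicit.
Unset Printing Implicit Defensive.
Import Order.TTheory GRing.Theory Num.Theory.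
Local Open Scope ring_scope.

(* Let m = floor dstar.  In the hard instance every delay is at least m, so no delay is
   revealed during the first L = min(m+1, T) rounds, and the law of the arms played
   there depends on the policy alone.  Some arm istar is then played at most L/K <= L/2
   times in expectation during these rounds.  Make istar the optimal arm, with delay m or
   D and mean dstar, and give every other arm delay D: each of the at least L/2 expected
   plays of another arm costs (D - dstar)/D >= 1/2, so the pseudo-regret is at least
   L/4 >= dstar/4. *)

Lemma exists_floor_nat (R : realFieldType) (N : nat) (x : R) :
  0 <= x -> x <= N%:R -> exists2 m : nat, m%:R <= x & x < m.+1%:R.
Proof.
elim: N x => [|N IH] x x_ge0 xN.
  by exists 0%N => //; apply: le_lt_trans xN _; rewrite ltr01.
have [xN' | Nx] := lerP x N%:R; first exact: IH.
have [xN1 | N1x] := ltrP x N.+1%:R; first by exists N; rewrite ?ltW.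
by exists N.+1 => //; apply: le_lt_trans xN _; rewrite ltr_nat.
Qed.

Lemma exists_le_mean (R : realFieldType) (K : nat) (w : 'I_K -> R) :
  (0 < K)%N -> exists i, w i <= (\sum_(j < K) w j) / K%:R.
Proof.
move=> K_gt0; exists [arg min_(i < Ordinal K_gt0) w i]%O.
case: arg_minP => // i _ i_min; rewrite ler_pdivlMr ?ltr0n //.
rewrite mulr_natr -[X in _ *+ X]card_ord -sumr_const.
by apply: ler_sum => j _; apply: i_min.
Qed.

Lemma exists_convex_weight (R : realFieldType) (a b x : R) :
  a < b -> a <= x <= b -> exists2 p, 0 <= p <= 1 & (1 - p) * a + p * b = x.
Proof.
move=> ab /andP [ax xb]; have ba_pos : 0 < b - a by rewrite subr_gt0.
exists ((x - a) / (b - a)); last by field; rewrite gt_eqF.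
apply/andP; split; first by rewrite divr_ge0 ?subr_ge0 // ltW.
by rewrite ler_pdivrMr // mul1r lerD2r.
Qed.

Lemma sum_tuple_rcons (V : nmodType) (X : finType) n (F : n.+1.-tuple X -> V) :
  \sum_(t : n.+1.-tuple X) F t = \sum_(h : n.-tuple X) \sum_(x : X) F (rcons_tuple h x).
Proof.
rewrite pair_bigA /= (reindex (fun p : n.-tuple X * X => rcons_tuple p.1 p.2)) //=.
exists (fun t : n.+1.-tuple X =>
          (belast_tuple (thead t) (behead_tuple t), last (thead t) (behead t))).
- move=> [h x] _; set t := rcons_tuple h x.
  have t_eta : thead t :: behead t = rcons h x := esym (congr1 val (tuple_eta t)).
  move: (lastI (thead t) (behead t)); rewrite t_eta => /rcons_inj [eh ex].
  by congr (_, _); first apply: val_inj.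
- move=> t _; apply: val_inj; rewrite /= -lastI.
  exact: esym (congr1 val (tuple_eta t)).
Qed.

Section TrajectoryExpectation.
Variables (R : realFieldType) (K D : nat).
Variables (pi : seq ('I_K * option 'I_D.+1) -> 'I_K -> R) (nu : 'I_K -> 'I_D.+1 -> R).

Definition traj_expect T (f : seq ('I_K * 'I_D.+1) -> R) : R :=
  \sum_(tr : T.-tuple ('I_K * 'I_D.+1)) traj_prob pi nu tr * f tr.

Lemma traj_prob_rcons T (h : T.-tuple ('I_K * 'I_D.+1)) x :
  traj_prob pi nu (rcons_tuple h x) =
  traj_prob pi nu h * (pi (observe T h) x.1 * nu x.1 x.2).
Proof.
have take_rcons t : (t <= T)%N -> take t (rcons h x) = take t h.
  by move=> tT; rewrite -cats1 takel_cat // size_tuple.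
rewrite /traj_prob big_ord_recr /=; congr (_ * _).
  apply: eq_bigr => t _; rewrite !(tnth_nth x) /= nth_rcons size_tuple ltn_ord.
  by rewrite take_rcons // ltnW.
by rewrite (tnth_nth x) /= nth_rcons size_tuple ltnn eqxx take_rcons // take_oversize ?size_tuple.
Qed.

Lemma traj_expect0 f : traj_expect 0 f = f [::].
Proof.
rewrite /traj_expect (eq_bigr (fun _ => f [::])) ?sumr_const ?card_tuple //.
by move=> tr _; rewrite (tuple0 tr) /traj_prob big_ord0 mul1r.
Qed.

Lemma traj_expectS T f :
  traj_expect T.+1 f =
  traj_expect T (fun h => \sum_(a < K) \sum_(d < D.+1)
                            pi (observe T h) a * nu a d * f (rcons h (a, d))).
Proof.
rewrite /traj_expect sum_tuple_rcons; apply: eq_bigr => h _.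
rewrite pair_bigA mulr_sumr; apply: eq_bigr => -[a d] _.
by rewrite traj_prob_rcons -!mulrA.
Qed.

Lemma eq_traj_expect T f g : f =1 g -> traj_expect T f = traj_expect T g.
Proof. by move=> fg; apply: eq_bigr => tr _; rewrite fg. Qed.

Lemma traj_expectD T f g :
  traj_expect T (fun h => f h + g h) = traj_expect T f + traj_expect T g.
Proof. by rewrite /traj_expect -big_split; apply: eq_bigr => tr _; rewrite mulrDr. Qed.

Lemma traj_expectB T f g :
  traj_expect T (fun h => f h - g h) = traj_expect T f - traj_expect T g.
Proof. by rewrite /traj_expect -sumrB; apply: eq_bigr => tr _; rewrite mulrBr. Qed.

Lemma traj_expectZ T c f : traj_expect T (fun h => c * f h) = c * traj_expect T f.
Proof. by rewrite /traj_expect mulr_sumr; apply: eq_bigr => tr _; rewrite mulrCA. Qed.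

Hypotheses (pi_policy : is_policy pi) (nu_instance : is_instance nu).

Lemma traj_prob_ge0 T (tr : T.-tuple ('I_K * 'I_D.+1)) : 0 <= traj_prob pi nu tr.
Proof.
have [pi_ge0 _] := pi_policy; have [nu_ge0 _] := nu_instance.
by apply: prodr_ge0 => t _; apply: mulr_ge0.
Qed.

Lemma traj_expect_ge0 T f : (forall h, 0 <= f h) -> 0 <= traj_expect T f.
Proof. by move=> f_ge0; apply: sumr_ge0 => tr _; rewrite mulr_ge0 ?traj_prob_ge0. Qed.

Lemma traj_expect_le T f g :
  (forall h, f h <= g h) -> traj_expect T f <= traj_expect T g.
Proof. by move=> fg; apply: ler_sum => tr _; rewrite ler_wpM2l ?traj_prob_ge0. Qed.

Lemma traj_expect_cst T c : traj_expect T (fun _ => c) = c.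
Proof.
have [_ pi1] := pi_policy; have [_ nu1] := nu_instance.
elim: T => [|T IH]; first exact: traj_expect0.
rewrite traj_expectS -[RHS]IH; apply: eq_traj_expect => h.
rewrite -[RHS]mul1r -(pi1 (observe T h)) mulr_suml; apply: eq_bigr => a _.
by rewrite -mulr_suml -mulr_sumr nu1 mulr1.
Qed.

Lemma traj_expect_cost T :
  traj_expect T (fun h => \sum_(p <- h) (p.2 : nat)%:R / D%:R) =
  \sum_(t < T) traj_expect t
     (fun h => \sum_(a < K) pi (observe t h) a * (mean_delay nu a / D%:R)).
Proof.
have [_ pi1] := pi_policy; have [_ nu1] := nu_instance.
elim: T => [|T IH]; first by rewrite traj_expect0 big_nil big_ord0.
rewrite traj_expectS big_ord_recr /= -IH -traj_expectD; apply: eq_traj_expect => h.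
set c := \sum_(p <- h) _.
have cost_rcons x : \sum_(p <- rcons h x) (p.2 : nat)%:R / D%:R = c + (x.2 : nat)%:R / D%:R.
  by rewrite -cats1 big_cat big_seq1.
under eq_bigr do under eq_bigr do rewrite cost_rcons mulrDr.
have c_avg : c = \sum_(a < K) pi (observe T h) a * c by rewrite -mulr_suml pi1 mul1r.
rewrite [in RHS]c_avg -big_split.
apply: eq_bigr => a _; rewrite big_split /= -mulr_suml -mulr_sumr nu1 mulr1.
rewrite [in RHS]/mean_delay mulr_suml mulr_sumr; congr (_ + _).
by apply: eq_bigr => d _; rewrite !mulrA.
Qed.

Lemma pseudo_regretE T dstar :
  pseudo_regret T pi nu dstar =
  \sum_(t < T) traj_expect t
     (fun h => \sum_(a < K) pi (observe t h) a * ((mean_delay nu a - dstar) / D%:R)).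
Proof.
have [_ pi1] := pi_policy.
rewrite /pseudo_regret.
have -> : \sum_(tr : T.-tuple _) traj_prob pi nu tr * total_cost R tr =
          traj_expect T (fun h => \sum_(p <- h) (p.2 : nat)%:R / D%:R).
  by apply: eq_bigr => tr _; rewrite /total_cost big_tuple.
have -> : T%:R * (dstar / D%:R) = \sum_(t < T) traj_expect t (fun _ => dstar / D%:R).
  by under eq_bigr do rewrite traj_expect_cst; rewrite sumr_const card_ord mulr_natl.
rewrite traj_expect_cost -sumrB; apply: eq_bigr => t _; rewrite -traj_expectB.
apply: eq_traj_expect => h.
have avg : dstar / D%:R = \sum_(a < K) pi (observe t h) a * (dstar / D%:R).
  by rewrite -mulr_suml pi1 mul1r.
by rewrite avg -sumrB; apply: eq_bigr => a _; rewrite -mulrBr mulrBl.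
Qed.

Lemma pseudo_regret_ge_gap T L dstar gap (istar : 'I_K) :
  (L <= T)%N -> (forall a, dstar <= mean_delay nu a) ->
  (forall a, a != istar -> dstar + gap <= mean_delay nu a) ->
  gap / D%:R * \sum_(t < L) (1 - traj_expect t (fun h => pi (observe t h) istar))
    <= pseudo_regret T pi nu dstar.
Proof.
have [pi_ge0 pi1] := pi_policy.
move=> LT opt gap_le; rewrite pseudo_regretE mulr_sumr.
have regret_ge0 o a : 0 <= pi o a * ((mean_delay nu a - dstar) / D%:R).
  by rewrite mulr_ge0 ?divr_ge0 ?subr_ge0.
rewrite (big_ord_widen T
  (fun t => gap / D%:R * (1 - traj_expect t (fun h => pi (observe t h) istar))) LT).
rewrite [X in _ <= X](bigID (fun t : 'I_T => (t < L)%N)) /= -[X in X <= _]addr0.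
apply: lerD; last by apply: sumr_ge0 => t _; apply: traj_expect_ge0 => h; apply: sumr_ge0.
apply: ler_sum => t _.
have -> : 1 - traj_expect t (fun h => pi (observe t h) istar) =
          traj_expect t (fun h => 1 - pi (observe t h) istar).
  by rewrite traj_expectB traj_expect_cst.
rewrite -traj_expectZ; apply: traj_expect_le => h.
have -> : 1 - pi (observe t h) istar = \sum_(a < K | a != istar) pi (observe t h) a.
  by rewrite -(pi1 (observe t h)) (bigD1 istar) //= addrC addrK.
rewrite mulr_sumr [X in _ <= X](bigD1 istar) //= -[X in X <= _]add0r.
apply: lerD (regret_ge0 _ _) _.
apply: ler_sum => a a_istar; rewrite mulrC ler_wpM2l // ler_wpM2r ?invr_ge0 //.
by rewrite lerBrDl gap_le.
Qed.

End TrajectoryExpectation.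

Definition no_feedback {K D : nat} (x : seq 'I_K) : seq ('I_K * option 'I_D.+1) :=
  [seq (a, None) | a <- x].

Section BlindPhase.
Variables (R : realFieldType) (K D : nat) (pi : seq ('I_K * option 'I_D.+1) -> 'I_K -> R).

Fixpoint blind_expect t (g : seq 'I_K -> R) : R :=
  if t is t'.+1 then
    blind_expect t' (fun x => \sum_(a < K) pi (no_feedback x) a * g (rcons x a))
  else g [::].

Lemma eq_blind_expect t g g' : g =1 g' -> blind_expect t g = blind_expect t g'.
Proof.
elim: t g g' => [|t IH] g g' gg' /=; first exact: gg'.
by apply: IH => x; apply: eq_bigr => a _; rewrite gg'.
Qed.

Lemma blind_expect_sum t n (g : 'I_n -> seq 'I_K -> R) :
  blind_expect t (fun x => \sum_(i < n) g i x) = \sum_(i < n) blind_expect t (g i).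
Proof.
elim: t g => [|t IH] g //=; rewrite -IH; apply: eq_blind_expect => x.
by rewrite exchange_big; apply: eq_bigr => a _; rewrite mulr_sumr.
Qed.

Lemma blind_expect1 t : is_policy pi -> blind_expect t (fun _ => 1) = 1.
Proof.
move=> [_ pi1]; elim: t => [|t IH] //=; rewrite -[RHS]IH; apply: eq_blind_expect => x.
by under eq_bigr do rewrite mulr1.
Qed.

Lemma sum_blind_plays t : is_policy pi ->
  \sum_(i < K) blind_expect t (fun x => pi (no_feedback x) i) = 1.
Proof.
move=> pi_policy; rewrite -blind_expect_sum -(blind_expect1 t pi_policy).
by apply: eq_blind_expect => x; case: pi_policy.
Qed.

Lemma exists_rarely_played_arm L : is_policy pi -> (0 < K)%N ->
  exists istar, \sum_(t < L) blind_expect t (fun x => pi (no_feedback x) istar) <= L%:R / K%:R.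
Proof.
move=> pi_policy K_gt0.
pose plays i := \sum_(t < L) blind_expect t (fun x => pi (no_feedback x) i).
have [istar rare] := exists_le_mean plays K_gt0; exists istar; move: rare.
rewrite /plays exchange_big /=.
under [in X in _ <= X / _]eq_bigr do rewrite sum_blind_plays //.
by rewrite sumr_const card_ord.
Qed.

Definition delays_ge (m : nat) (nu : 'I_K -> 'I_D.+1 -> R) :=
  forall a (d : 'I_D.+1), (d < m)%N -> nu a d = 0.

Lemma observe_blind t m (h : seq ('I_K * 'I_D.+1)) :
  (t <= m)%N -> all (fun p : 'I_K * 'I_D.+1 => m <= p.2)%N h ->
  observe t h = no_feedback (map fst h).
Proof.
rewrite /observe /no_feedback -map_comp => tm.
elim: h 0%N => [|p h IH] s //= /andP [mp mh]; rewrite IH //.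
by rewrite ltnNge (leq_trans tm (leq_trans mp (leq_addl s _))).
Qed.

Lemma traj_expect_blind (nu : 'I_K -> 'I_D.+1 -> R) m t f g :
  is_instance nu -> delays_ge m nu -> (t <= m)%N ->
  (forall h, all (fun p : 'I_K * 'I_D.+1 => m <= p.2)%N h -> f h = g (map fst h)) ->
  traj_expect pi nu t f = blind_expect t g.
Proof.
move=> [_ nu1] nu_ge; elim: t f g => [|t IH] f g tm fg.
  by rewrite traj_expect0 fg.
rewrite traj_expectS /=; apply: IH => [|h mh]; first exact: ltnW.
rewrite (observe_blind (ltnW tm) mh); apply: eq_bigr => a _.
rewrite -[RHS]mulr1 -(nu1 a) !mulr_sumr; apply: eq_bigr => d _.
have [md | /nu_ge ->] := leqP m d; last by rewrite !mulr0 mul0r.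
by rewrite fg ?all_rcons ?md // map_rcons mulrAC.
Qed.

Lemma traj_expect_play_blind (nu : 'I_K -> 'I_D.+1 -> R) m t i :
  is_instance nu -> delays_ge m nu -> (t <= m)%N ->
  traj_expect pi nu t (fun h => pi (observe t h) i) =
  blind_expect t (fun x => pi (no_feedback x) i).
Proof.
move=> nu_inst nu_ge tm; apply: (traj_expect_blind nu_inst nu_ge tm) => h mh.
by rewrite (observe_blind tm mh).
Qed.

End BlindPhase.

Section HardInstance.
Variables (R : realFieldType) (K D : nat).

Definition two_point (m : 'I_D.+1) (p : R) (j : 'I_D.+1) : R :=
  (1 - p) * (j == m)%:R + p * (j == ord_max)%:R.

Lemma sum_two_point m p (f : 'I_D.+1 -> R) :
  \sum_j two_point m p j * f j = (1 - p) * f m + p * f ord_max.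
Proof.
have sum_pick k : \sum_(j < D.+1) (j == k)%:R * f j = f k.
  by rewrite (bigD1 k) //= eqxx mul1r big1 ?addr0 // => j /negbTE ->; rewrite mul0r.
under eq_bigr do rewrite mulrDl -!mulrA.
by rewrite big_split /= -!mulr_sumr !sum_pick.
Qed.

Definition hard_instance (m : 'I_D.+1) (p : R) (istar : 'I_K) : 'I_K -> 'I_D.+1 -> R :=
  fun a => two_point m (if a == istar then p else 1).

Lemma hard_instance_is_instance m p istar :
  0 <= p <= 1 -> is_instance (hard_instance m p istar).
Proof.
move=> /andP [p_ge0 p_le1]; rewrite /hard_instance; split => [a j | a].
  by case: ifP => _; rewrite addr_ge0 ?mulr_ge0 ?subr_ge0 ?ler01.
under eq_bigr do rewrite -[two_point _ _ _]mulr1.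
by rewrite sum_two_point !mulr1 subrK.
Qed.

Lemma mean_delay_hard_instance m p istar a :
  mean_delay (hard_instance m p istar) a =
  if a == istar then (1 - p) * m%:R + p * D%:R else D%:R.
Proof.
rewrite /mean_delay /hard_instance sum_two_point.
by case: ifP => _; rewrite ?subrr ?mul0r ?add0r ?mul1r.
Qed.

Lemma hard_instance_delays_ge (m : 'I_D.+1) p istar :
  delays_ge (m : nat) (hard_instance m p istar).
Proof.
move=> a d dm; rewrite /hard_instance /two_point.
have d_max : (d < @ord_max D)%N by apply: leq_trans dm (leq_ord m).
by rewrite -!val_eqE /= (ltn_eqF dm) (ltn_eqF d_max) !mulr0 addr0.
Qed.

End HardInstance.

Section HardInstanceRegret.
Variables (R : realFieldType) (K D : nat) (pi : seq ('I_K * option 'I_D.+1) -> 'I_K -> R).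
Variables (m : 'I_D.+1) (p dstar : R) (istar : 'I_K).
Hypotheses (p01 : 0 <= p <= 1) (dstarE : (1 - p) * (m : nat)%:R + p * D%:R = dstar).

Let nu := hard_instance m p istar.

Lemma hard_instance_min_mean_delay : min_mean_delay nu dstar.
Proof.
have [p_ge0 p_le1] := andP p01.
have dstar_le : dstar <= D%:R.
  rewrite -dstarE [X in _ <= X](_ : _ = (1 - p) * D%:R + p * D%:R); last by ring.
  by rewrite lerD2r ler_wpM2l ?subr_ge0 // ler_nat -ltnS.
split=> [|a]; first by exists istar; rewrite /nu mean_delay_hard_instance eqxx.
by rewrite /nu mean_delay_hard_instance; case: ifP; rewrite ?dstarE.
Qed.

Lemma hard_instance_regret_ge T L :
  is_policy pi -> (L <= T)%N -> (L <= m.+1)%N ->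
  (D%:R - dstar) / D%:R *
    (L%:R - \sum_(t < L) blind_expect pi t (fun x => pi (no_feedback x) istar))
  <= pseudo_regret T pi nu dstar.
Proof.
move=> pi_policy LT Lm; have nu_inst : is_instance nu by apply: hard_instance_is_instance.
have [_ opt] := hard_instance_min_mean_delay.
have blind_plays :
    \sum_(t < L) blind_expect pi t (fun x => pi (no_feedback x) istar) =
    \sum_(t < L) traj_expect pi nu t (fun h => pi (observe t h) istar).
  apply: eq_bigr => t _; have tm : (t <= m)%N by rewrite -ltnS (leq_trans _ Lm).
  by rewrite (traj_expect_play_blind pi istar nu_inst (hard_instance_delays_ge _ _) tm).
have -> : L%:R = \sum_(t < L) (1 : R) by rewrite sumr_const card_ord.
rewrite blind_plays -sumrB.
apply: (pseudo_regret_ge_gap pi_policy nu_inst LT opt) => a /negbTE a_istar.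
by rewrite /nu mean_delay_hard_instance a_istar addrC subrK.
Qed.

End HardInstanceRegret.

Theorem theorem2 (R : realFieldType) :
  exists c : R, 0 < c /\
  forall (K D T : nat) (dstar : R),
    (2 <= K)%N -> (0 < D)%N ->
    0 <= dstar -> dstar <= D%:R / 2 -> dstar <= T%:R ->
    forall pi : seq ('I_K * option 'I_D.+1) -> 'I_K -> R,
      is_policy pi ->
      exists nu : 'I_K -> 'I_D.+1 -> R,
        is_instance nu /\ min_mean_delay nu dstar /\
        c * dstar <= pseudo_regret T pi nu dstar.
Proof.
exists (1 / 4); split=> [|K D T dstar K_ge2 D_gt0 dstar_ge0 dstar_le dstar_le_T pi pi_policy].
  by rewrite divr_gt0 ?ltr01 ?ltr0n.
have D_pos : 0 < D%:R :> R by rewrite ltr0n.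
have [m m_le m_gt] : exists2 m : nat, m%:R <= dstar & dstar < m.+1%:R.
  by apply: (exists_floor_nat (N := D)); lra.
have m_lt_D : (m < D)%N by rewrite -(ltr_nat R); lra.
pose L := minn m.+1 T.
have dstar_le_L : dstar <= L%:R by rewrite /L /minn; case: ifP => _; [apply: ltW |].
have K_gt0 : (0 < K)%N := ltnW K_ge2.
have [istar rare] := exists_rarely_played_arm L pi_policy K_gt0.
have [p p01 dstarE] : exists2 p : R, 0 <= p <= 1 & (1 - p) * m%:R + p * D%:R = dstar.
  by apply: exists_convex_weight; rewrite ?ltr_nat //; lra.
pose mo : 'I_D.+1 := Ordinal (leqW m_lt_D).
exists (hard_instance mo p istar).
split; first exact: hard_instance_is_instance.
split; first exact: (hard_instance_min_mean_delay (m := mo)).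
apply: le_trans (hard_instance_regret_ge (m := mo) istar p01 dstarE pi_policy
                   (geq_minr _ _) (geq_minl _ _)).
have rare2 : \sum_(t < L) blind_expect pi t (fun x => pi (no_feedback x) istar) <= L%:R / 2.
  apply: le_trans rare _; rewrite ler_wpM2l ?ler0n // lef_pV2 ?posrE ?ltr0n //.
  by rewrite (ler_nat R 2).
have gap_ge : 1 / 2 <= (D%:R - dstar) / D%:R by rewrite ler_pdivlMr //; lra.
rewrite -/L; apply: (@le_trans _ _ (1 / 2 * (L%:R / 2))); first lra.
by apply: ler_pM; lra.
Qed.
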